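(* Let $\Pi$ be the node-edge-checkable problem encoding $(\text{edge-degree}+1)$-edge coloring defined below, and $\Pi^*$ its node-list variant. Then for every valid input instance $(S,h_{\mathrm{in}})$ of $\Pi^*$ (on any finite semi-graph $S$), $\Pi^*$ admits a valid solution.
   Context: Semi-graph: a bipartite graph $S=(A\sqcup B,C)$ with every $b\in B$ of degree at most $2$; $A$ = nodes, $B$ = edges, $C$ = half-edges (incident node–edge pairs); degree of a node / rank of an edge = its degree in $S$. Node-edge-checkable problem $\Pi=(\Sigma,\mathcal N_\Pi,\mathcal E_\Pi)$: $\mathcal N_\Pi^i$ ($i\ge 0$) and $\mathcal E_\Pi^i$ ($i\in\{0,1,2\}$) are collections of cardinality-$i$ multisets over $\Sigma$. The problem $\Pi$: $\Sigma=\{(x,y): x,y\in\mathbb Z_{>0}\}\cup\{D\}$. For each $i\ge0$, $\mathcal N_\Pi^i$ consists of all cardinality-$i$ multisets of the form $\{(a_1,b_1),\dots,(a_p,b_p),D,\dots,D\}$ (with $i-p$ copies of $D$, $0\le p\le i$) such that $a_k\le p$ for all $k\le p$ and $b_l\ne b_m$ for all $l\ne m$. $\mathcal E_\Pi^0=\{\emptyset\}$, $\mathcal E_\Pi^1=\{\{D\}\}$, $\mathcal E_\Pi^2=\{\{(a_1,b),(a_2,b)\}: a_1,a_2,b\in\mathbb Z_{>0},\ a_1+a_2\ge b+1\}$. Node-list variant $\Pi^*$: for $i,j\ge0$ and $\psi\in\mathcal N_\Pi^j$, $\mathcal N^i_{\Pi,\psi}$ is the set of cardinality-$i$ multisets $\chi$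 over $\Sigma$ with $\chi\uplus\psi\in\mathcal N_\Pi^{i+j}$, and $\mathcal L^i=\{\mathcal N^i_{\Pi,\psi}:\psi\in\mathcal N_\Pi^j\text{ for some }j\ge0\}$. A valid input instance is $(S,h_{\mathrm{in}})$ with $h_{\mathrm{in}}(v)\in\mathcal L^{\deg(v)}$ for each node $v$. A valid solution is $h_{\mathrm{out}}:H(S)\to\Sigma$ such that for each node $v$ the multiset of labels on its incident half-edges lies in $h_{\mathrm{in}}(v)$, and for each edge $e$ the multiset of labels on its incident half-edges lies in $\mathcal E_\Pi^{\mathrm{rank}(e)}$. *)

From mathcomp Require Import all_boot.
Set Implicit Arguments. Unset Strict Implicit. Unset Printing Implicit Defensive.

(* Labels: [Some (x,y)] is the pair (x,y); [None] is the symbol D.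
   The alphabet Sigma consists of the labels with x,y > 0 (predicate in_Sigma). *)
Definition Label := option (nat * nat).
Notation D := (@None (nat * nat)).
Definition LP (x y : nat) : Label := Some (x, y).

Definition in_Sigma (l : Label) : bool :=
  match l with Some (x, y) => (0 < x) && (0 < y) | None => true end.

(* Multisets over Sigma are represented by sequences; all predicates below are
   invariant under permutation. *)
Definition pairs_of (m : seq Label) : seq (nat * nat) := pmap id m.

Definition N_Pi (i : nat) (m : seq Label) : Prop :=
  [/\ size m = i, all in_Sigma m,
      all (fun q => q.1 <= size (pairs_of m)) (pairs_of m)
    & uniq (map snd (pairs_of m))].

Definition E_Pi (i : nat) (m : seq Label) : Prop :=
  match i with
  | 0 => m = [::]
  | 1 => m = [:: D]
  | 2 => exists a1 a2 b, [/\ 0 < a1, 0 < a2, 0 < b,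
           perm_eq m [:: LP a1 b; LP a2 b] & b + 1 <= a1 + a2]
  | _ => False
  end.

Definition N_list (i : nat) (psi : seq Label) (chi : seq Label) : Prop :=
  [/\ size chi = i, all in_Sigma chi & N_Pi (i + size psi) (chi ++ psi)].

Definition in_L (i : nat) (L : seq Label -> Prop) : Prop :=
  exists j (psi : seq Label), N_Pi j psi /\ forall chi, L chi <-> N_list i psi chi.

(* Finite semi-graph: nodes A, edges B, half-edges C ⊆ A × B, every edge of degree <= 2. *)
Definition semi_graph (A B : finType) (C : {set A * B}) : Prop :=
  forall b : B, #|[set a : A | (a, b) \in C]| <= 2.

Definition node_deg (A B : finType) (C : {set A * B}) (v : A) : nat :=
  #|[set e : B | (v, e) \in C]|.
Definition edge_rank (A B : finType) (C : {set A * B}) (e : B) : nat :=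
  #|[set v : A | (v, e) \in C]|.

Definition node_labels (A B : finType) (C : {set A * B}) (h : A * B -> Label) (v : A) :=
  [seq h (v, e) | e <- enum B & (v, e) \in C].
Definition edge_labels (A B : finType) (C : {set A * B}) (h : A * B -> Label) (e : B) :=
  [seq h (v, e) | v <- enum A & (v, e) \in C].

Definition valid_input (A B : finType) (C : {set A * B})
    (h_in : A -> seq Label -> Prop) : Prop :=
  forall v : A, in_L (node_deg C v) (h_in v).

(* h_out is a labelling of the half-edges (its values outside C are irrelevant). *)
Definition valid_solution (A B : finType) (C : {set A * B})
    (h_in : A -> seq Label -> Prop) (h_out : A * B -> Label) : Prop :=
  [/\ forall c, c \in C -> in_Sigma (h_out c),
      forall v : A, h_in v (node_labels C h_out v)
    & forall e : B, E_Pi (edge_rank C e) (edge_labels C h_out e)].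

(** Each node list is N_{Pi,psi v} for some [psi v] in N_Pi; call the second
    components of the pairs of [psi v] the colours taken at [v], and let
    [budget v] be the number of pairs of [psi v] plus the number of rank-2
    edges at [v].  Colour the rank-2 edges greedily: an edge [uv] must avoid the
    colours taken at [u] and [v] and fewer than [full_deg u + full_deg v - 1]
    colours of adjacent edges, i.e. at most [budget u + budget v - 2] values, so
    some colour [b] with [0 < b < budget u + budget v] is free.  Label the
    half-edge [(v, e)] by [(budget v, b)] if [e] has rank 2 and by [D] otherwise.
    At [v] the pairs of the labels and of [psi v] then number exactly
    [budget v], their colours are distinct, and every edge [uv] satisfies
    [budget u + budget v >= b + 1]. *)
From mathcomp Require Import all_boot zify.
From Stdlib Require Import ClassicalEpsilon.
Set Implicit Arguments. Unset Strict Implicit. Unset Printing Implicit Defensive.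

Lemma size_filter_enum (T : finType) (P : pred T) :
  size [seq x <- enum T | P x] = #|[set x | P x]|.
Proof. by rewrite cardsE cardE enumT /enum_mem; congr size. Qed.

Lemma exists_fresh_pos (s : seq nat) n :
  size s < n -> exists2 c, 0 < c <= n & c \notin s.
Proof.
move=> lt_s_n.
have [/hasP [c] | /hasPn all_in] := boolP (has (fun c => c \notin s) (iota 1 n)).
  by rewrite mem_iota add1n => c_range c_fresh; exists c; first lia.
have := uniq_leq_size (iota_uniq 1 n) (fun c c_in => negbNE (all_in c c_in)).
by rewrite size_iota leqNgt lt_s_n.
Qed.

Definition taken_colors (psi : seq Label) : seq nat := map snd (pairs_of psi).

Lemma N_list_extend i psi chi :
  N_Pi (size psi) psi -> size chi = i -> all in_Sigma chi ->
  all (fun q => q.1 <= size (pairs_of chi) + size (pairs_of psi)) (pairs_of chi) ->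
  uniq (taken_colors chi) -> ~~ has (mem (taken_colors psi)) (taken_colors chi) ->
  N_list i psi chi.
Proof.
move=> [_ psi_Sigma psi_bound psi_uniq] size_chi chi_Sigma chi_bound chi_uniq disj.
have pairs_cat : pairs_of (chi ++ psi) = pairs_of chi ++ pairs_of psi.
  by rewrite /pairs_of pmap_cat.
split=> //; split; rewrite ?size_cat ?size_chi ?all_cat ?chi_Sigma //.
- rewrite pairs_cat all_cat size_cat chi_bound /=; apply/allP => q /(allP psi_bound).
  by move/leq_trans; apply; rewrite leq_addl.
- move: chi_uniq disj; rewrite /taken_colors pairs_cat map_cat cat_uniq has_sym => -> ->.
  exact: psi_uniq.
Qed.

Lemma in_L_witness i (L : seq Label -> Prop) :
  in_L i L -> exists psi, N_Pi (size psi) psi /\ forall chi, L chi <-> N_list i psi chi.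
Proof. by case=> j [psi [psi_N psi_L]]; exists psi; case: (psi_N) => ->. Qed.

Section GreedyColoring.
Variables (A B : finType) (C : {set A * B}) (forb : A -> seq nat).

Definition full_edges : {set B} := [set e | edge_rank C e == 2].
Definition full_deg (v : A) : nat := #|[set e in full_edges | (v, e) \in C]|.
Definition budget (v : A) : nat := size (forb v) + full_deg v.

Definition proper_coloring (E : {set B}) (col : B -> nat) : Prop :=
  forall e, e \in E -> [/\ 0 < col e,
    forall v, (v, e) \in C -> col e \notin forb v,
    forall u v, u != v -> (u, e) \in C -> (v, e) \in C -> col e < budget u + budget v &
    forall v e', e' \in E -> e' != e -> (v, e) \in C -> (v, e') \in C -> col e != col e'].

Definition colors_at (E : {set B}) (col : B -> nat) (v : A) : seq nat :=
  [seq col x | x <- enum [set x in E | (v, x) \in C]].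

Lemma mem_colors_at (E : {set B}) (col : B -> nat) v x :
  x \in E -> (v, x) \in C -> col x \in colors_at E col v.
Proof. by move=> xE vx; apply: map_f; rewrite mem_enum inE xE vx. Qed.

Lemma size_colors_at (E : {set B}) (col : B -> nat) v e :
  E \subset full_edges -> e \in full_edges -> (v, e) \in C ->
  size (colors_at (E :\ e) col v) < full_deg v.
Proof.
move=> sub_E e_full ve; rewrite size_map -cardE.
apply: (@leq_ltn_trans #|[set x in full_edges | (v, x) \in C] :\ e|).
  apply: subset_leq_card; apply/subsetP => x; rewrite !inE => /andP [/andP [-> xE] ->].
  by have := subsetP sub_E x xE; rewrite inE => ->.
rewrite /full_deg (cardsD1 e [set x in full_edges | (v, x) \in C]).
by move: e_full; rewrite !inE ve => ->.
Qed.

Lemma proper_coloring_extend (E : {set B}) e (col : B -> nat) :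
  e \in E -> E \subset full_edges -> proper_coloring (E :\ e) col ->
  exists c, proper_coloring E (fun x => if x == e then c else col x).
Proof.
move=> eE sub_E col_ok; have e_full := subsetP sub_E e eE.
have [u [v [uv ends_e]]] : exists u v, u != v /\ [set w | (w, e) \in C] = [set u; v].
  by apply/cards2P; move: e_full; rewrite inE.
have ends w : ((w, e) \in C) = (w \in [set u; v]) by rewrite -ends_e inE.
have [ue ve] : (u, e) \in C /\ (v, e) \in C by rewrite !ends !inE !eqxx orbT.
pose F := forb u ++ forb v ++ colors_at (E :\ e) col u ++ colors_at (E :\ e) col v.
have size_F : size F < (budget u + budget v).-1.
  have := size_colors_at col sub_E e_full ue; have := size_colors_at col sub_E e_full ve.
  rewrite /F !size_cat /budget; lia.
have [c c_range c_fresh] := exists_fresh_pos size_F.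
have c_fresh_at w : (w, e) \in C -> c \notin forb w ++ colors_at (E :\ e) col w.
  rewrite ends => /set2P [] ->; apply: contra c_fresh;
  by rewrite /F !mem_cat => /orP [] ->; rewrite ?orbT.
have c_neq w x : x \in E :\ e -> (w, e) \in C -> (w, x) \in C -> c != col x.
  move=> xE we wx; apply: contraNneq (c_fresh_at w we) => ->.
  by rewrite mem_cat mem_colors_at ?orbT.
exists c => x xE; case: (eqVneq x e) => [-> | xe].
  split; first by case/andP: c_range.
  - by move=> w /c_fresh_at; rewrite mem_cat negb_or => /andP [].
  - move=> u' v' uv'; rewrite !ends => /set2P [] eq_u /set2P [] eq_v; subst u' v';
    rewrite ?eqxx // in uv'; by case/andP: c_range => _; lia.
  - move=> w e' e'E e'e we we'; rewrite (negbTE e'e).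
    by apply: (c_neq w) => //; rewrite !inE e'e.
have xEe : x \in E :\ e by rewrite !inE xe.
have [col_pos col_forb col_budget col_adj] := col_ok x xEe.
split=> // w e' e'E e'x wx we'; case: (eqVneq e' e) => [e'_eq | e'e].
  by subst e'; rewrite eq_sym (c_neq w).
by apply: (col_adj w) => //; rewrite !inE e'e.
Qed.

Lemma proper_coloring_exists (E : {set B}) :
  E \subset full_edges -> exists col, proper_coloring E col.
Proof.
move: {2}#|E| (erefl #|E|) => n; elim: n E => [|n IH] E card_E sub_E.
  by exists (fun _ => 0) => e; move/eqP: card_E; rewrite cards_eq0 => /eqP ->; rewrite inE.
have [e eE] : exists e, e \in E by apply/set0Pn; rewrite -card_gt0 card_E.
have card_Ee : #|E :\ e| = n by move: card_E; rewrite (cardsD1 e) eE => -[].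
have [col col_ok] := IH _ card_Ee (subset_trans (subsetDl _ _) sub_E).
have [c col_c_ok] := proper_coloring_extend eE sub_E col_ok.
by exists (fun x => if x == e then c else col x).
Qed.

End GreedyColoring.

Section ColoringLabels.
Variables (A B : finType) (C : {set A * B}) (psi : A -> seq Label) (col : B -> nat).
Hypothesis psi_ok : forall v, N_Pi (size (psi v)) (psi v).
Hypothesis col_ok : proper_coloring C (taken_colors \o psi) (full_edges C) col.

Local Notation budget := (budget C (taken_colors \o psi)).

Definition coloring_labels (x : A * B) : Label :=
  if x.2 \in full_edges C then LP (budget x.1) (col x.2) else D.

Lemma budget_gt0 v e : (v, e) \in C -> e \in full_edges C -> 0 < budget v.
Proof.
move=> ve e_full; rewrite /budget ltn_addl //.
by rewrite card_gt0; apply/set0Pn; exists e; rewrite inE e_full ve.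
Qed.

Lemma coloring_labels_in_Sigma x : x \in C -> in_Sigma (coloring_labels x).
Proof.
case: x => v e ve; rewrite /coloring_labels /=; case: ifP => //= e_full.
by rewrite (budget_gt0 ve e_full); case: (col_ok e_full).
Qed.

Lemma pairs_of_node_labels v :
  pairs_of (node_labels C coloring_labels v)
  = [seq (budget v, col e) | e <- enum B & ((v, e) \in C) && (e \in full_edges C)].
Proof.
rewrite /node_labels /coloring_labels; elim: (enum B) => //= e s IH.
by case: ((v, e) \in C) => //=; case: ifP => e_full; rewrite /= IH ?e_full.
Qed.

Lemma node_labels_valid v : N_list (node_deg C v) (psi v) (node_labels C coloring_labels v).
Proof.
have size_pairs : size (pairs_of (node_labels C coloring_labels v)) = full_deg C v.
  rewrite pairs_of_node_labels size_map size_filter_enum.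
  by apply: eq_card => e; rewrite !inE andbC.
apply: N_list_extend => //.
- by rewrite size_map size_filter_enum.
- apply/allP => l /mapP [e]; rewrite mem_filter => /andP [ve _] ->.
  exact: coloring_labels_in_Sigma.
- rewrite size_pairs addnC; apply/allP => q.
  by rewrite pairs_of_node_labels => /mapP [e _ ->]; rewrite /budget /= size_map.
- rewrite /taken_colors pairs_of_node_labels -map_comp map_inj_in_uniq.
    exact: filter_uniq (enum_uniq B).
  move=> e e'; rewrite !mem_filter => /andP [/andP [ve e_full] _] /andP [/andP [ve' e'_full] _].
  have [_ _ _ col_adj] := col_ok e_full.
  by move/eqP; apply: contraTeq => e_e'; apply: (col_adj v); rewrite // eq_sym.
- apply/hasPn => c; rewrite /taken_colors pairs_of_node_labels -map_comp.
  case/mapP => e; rewrite mem_filter => /andP [/andP [ve e_full] _] ->.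
  by have [_ col_forb _ _] := col_ok e_full; apply: col_forb.
Qed.

Lemma edge_labels_valid e :
  edge_rank C e <= 2 -> E_Pi (edge_rank C e) (edge_labels C coloring_labels e).
Proof.
pose s := [seq v <- enum A | (v, e) \in C].
have rank_e : edge_rank C e = size s by rewrite size_filter_enum.
have uniq_s : uniq s by exact: filter_uniq (enum_uniq A).
have ends v : v \in s -> (v, e) \in C by rewrite mem_filter => /andP [].
have e_full : (e \in full_edges C) = (size s == 2) by rewrite inE rank_e.
rewrite rank_e /edge_labels -/s /coloring_labels /= e_full.
clearbody s; clear rank_e; move: uniq_s ends e_full.
case: s => [|u [|v [|w t]]] //= uv ends e_full _.
have {}e_full : e \in full_edges C by rewrite e_full.
have [ue ve] : (u, e) \in C /\ (v, e) \in C by split; apply: ends; rewrite !inE eqxx ?orbT.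
have [col_pos _ col_budget _] := col_ok e_full.
exists (budget u), (budget v), (col e).
rewrite (budget_gt0 ue e_full) (budget_gt0 ve e_full) addn1 col_budget //.
by move: uv; rewrite inE andbT.
Qed.

End ColoringLabels.

Theorem mainTheorem9 (A B : finType) (C : {set A * B})
    (h_in : A -> seq Label -> Prop) :
  semi_graph C -> valid_input C h_in ->
  exists h_out : A * B -> Label, valid_solution C h_in h_out.
Proof.
move=> rank_le2 input_ok.
have [psi psi_ok] := @choice _ _ _ (fun v => in_L_witness (input_ok v)).
have [col col_ok] := proper_coloring_exists (taken_colors \o psi) (subxx (full_edges C)).
exists (coloring_labels C psi col); split.
- exact: coloring_labels_in_Sigma col_ok.
- move=> v; apply/(proj2 (psi_ok v)).
  exact: node_labels_valid (fun w => proj1 (psi_ok w)) col_ok v.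
- by move=> e; apply: edge_labels_valid col_ok e (rank_le2 e).
Qed.
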